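(* Let $E\subset\mathbb{S}^1\times M_{2\times2}(\mathbb{C})$ be a real-analytic complex line subbundle over $\mathbb{S}^1$ such that (1) $E^*=E$, i.e. for each $\lambda\in\mathbb{S}^1$ the fiber $E(\lambda)$ is closed under conjugate transpose, and (2) for every $\lambda\in\mathbb{S}^1$ except possibly finitely many, the fiber $E(\lambda)$ contains a positive definite Hermitian matrix. Then there exists a real-analytic section $X$ of $E$ such that $X(\lambda)$ is Hermitian and positive semidefinite for every $\lambda\in\mathbb{S}^1$ and $\det X\not\equiv0$. *)

From Stdlib Require Import Reals List.
From Coquelicot Require Import Coquelicot.
Open Scope R_scope.

Definition analytic_at (f : R -> R) (x0 : R) : Prop :=
  exists r : R, 0 < r /\ exists a : nat -> R,
    forall x : R, Rabs (x - x0) < r -> is_pseries a (x - x0) (f x).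

Record Mat2 : Type := mkMat2 { m11 : C; m12 : C; m21 : C; m22 : C }.

Definition Mat2_zero : Mat2 := mkMat2 0%C 0%C 0%C 0%C.

Definition Mat2_scale (c : C) (A : Mat2) : Mat2 :=
  mkMat2 (c * m11 A)%C (c * m12 A)%C (c * m21 A)%C (c * m22 A)%C.

Definition Mat2_adj (A : Mat2) : Mat2 :=
  mkMat2 (Cconj (m11 A)) (Cconj (m21 A)) (Cconj (m12 A)) (Cconj (m22 A)).

Definition Mat2_det (A : Mat2) : C := (m11 A * m22 A - m12 A * m21 A)%C.

Definition hermitian (A : Mat2) : Prop := Mat2_adj A = A.

Definition qform (A : Mat2) (v1 v2 : C) : C :=
  (Cconj v1 * (m11 A * v1 + m12 A * v2) + Cconj v2 * (m21 A * v1 + m22 A * v2))%C.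

Definition pos_def (A : Mat2) : Prop :=
  hermitian A /\ forall v1 v2 : C, (v1 <> 0%C \/ v2 <> 0%C) -> 0 < Re (qform A v1 v2).

Definition pos_semidef (A : Mat2) : Prop :=
  hermitian A /\ forall v1 v2 : C, 0 <= Re (qform A v1 v2).

Definition mat_analytic_at (f : R -> Mat2) (x0 : R) : Prop :=
  analytic_at (fun t => Re (m11 (f t))) x0 /\ analytic_at (fun t => Im (m11 (f t))) x0 /\
  analytic_at (fun t => Re (m12 (f t))) x0 /\ analytic_at (fun t => Im (m12 (f t))) x0 /\
  analytic_at (fun t => Re (m21 (f t))) x0 /\ analytic_at (fun t => Im (m21 (f t))) x0 /\
  analytic_at (fun t => Re (m22 (f t))) x0 /\ analytic_at (fun t => Im (m22 (f t))) x0.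

(** The circle S^1 is parametrized by theta |-> exp(i theta); objects over S^1
    are 2*PI-periodic objects over R.  A subbundle E is given by its fibers
    E theta (a set of matrices). *)
Definition periodic_fibers (E : R -> Mat2 -> Prop) : Prop :=
  forall (theta : R) (A : Mat2), E (theta + 2 * PI) A <-> E theta A.

(** E is a real-analytic complex line subbundle of S^1 x M_2(C): near every
    point it is the complex span of a nowhere-vanishing real-analytic local
    frame s. *)
Definition analytic_line_subbundle (E : R -> Mat2 -> Prop) : Prop :=
  periodic_fibers E /\
  forall theta0 : R, exists r : R, 0 < r /\ exists s : R -> Mat2,
    forall theta : R, Rabs (theta - theta0) < r ->
      mat_analytic_at s theta /\ s theta <> Mat2_zero /\
      (forall A : Mat2, E theta A <-> exists c : C, A = Mat2_scale c (s theta)).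

Definition analytic_section (E : R -> Mat2 -> Prop) (X : R -> Mat2) : Prop :=
  (forall theta : R, X (theta + 2 * PI) = X theta) /\
  (forall theta : R, mat_analytic_at X theta) /\
  (forall theta : R, E theta (X theta)).

From Stdlib Require Import Reals List.
From Coquelicot Require Import Coquelicot.
From Stdlib Require Import Lra Lia ZArith IndefiniteDescription.
Open Scope R_scope.

(* For A <> 0 put N(A) = conj(tr A) / |A|^2 * A.  Since N(cA) = N(A) for c <> 0, N of any
   nonzero element of the fiber E(theta) defines a section X; it is real-analytic because
   near each point X = N o s for an analytic nonvanishing local frame s, and the reciprocal
   of a nonvanishing analytic function is analytic.  As E* = E, A^* = cA, which makes X
   Hermitian.  If E(theta) contains a positive definite P then X(theta) = (tr P/|P|^2) P is
   positive definite; such theta are dense, so by continuity the diagonal entries and the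
   determinant of X are nonnegative everywhere, i.e. X is positive semidefinite, and
   det X > 0 at those theta. *)

(** * Power series and real-analytic functions *)

Lemma is_pseries_bounded_terms (a : nat -> R) (x l : R) :
  is_pseries a x l -> exists M, forall n, Rabs (a n * x ^ n) <= M.
Proof.
  intros H; apply is_pseries_R in H.
  destruct (filterlim_bounded (fun n => a n * x ^ n)) as [M HM].
  - exists 0; apply ex_series_lim_0; exists l; exact H.
  - exists M; exact HM.
Qed.

Lemma is_pseries_le_CV_radius (a : nat -> R) (x l : R) :
  is_pseries a x l -> Rbar_le x (CV_radius a).
Proof.
  intros H; apply (proj1 (CV_radius_bounded a)).
  exact (is_pseries_bounded_terms a x l H).
Qed.

Lemma is_series_first_term (u : nat -> R) :
  (forall n, u (S n) = 0) -> is_series u (u 0%nat).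
Proof.
  intros Hu; apply is_series_decr_1.
  apply (is_series_ext (fun _ => 0)); [intros n; rewrite Hu; reflexivity|].
  match goal with
  | |- is_series _ ?l => replace l with 0 by (unfold plus, opp; simpl; ring)
  end.
  apply (filterlim_ext (fun _ => 0)).
  - intros n; rewrite sum_n_const; simpl; ring.
  - apply filterlim_const.
Qed.

Lemma pseries_near_CV_radius (f : R -> R) (x0 r : R) (a : nat -> R) :
  (forall x, Rabs (x - x0) < r -> is_pseries a (x - x0) (f x)) ->
  forall y, Rabs y < r -> Rbar_lt (Rabs y) (CV_radius a).
Proof.
  intros Hf y Hy.
  set (rho := (Rabs y + r) / 2).
  assert (Hrho : Rbar_le rho (CV_radius a)).
  { apply (is_pseries_le_CV_radius a rho (f (x0 + rho))).
    replace rho with (x0 + rho - x0) at 1 by ring.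
    apply Hf; replace (x0 + rho - x0) with rho by ring.
    unfold rho; pose proof (Rabs_pos y); rewrite Rabs_pos_eq; lra. }
  destruct (CV_radius a) as [rad| |]; simpl in *; try tauto.
  unfold rho in Hrho; lra.
Qed.

Lemma analytic_at_ext_near (f g : R -> R) (x0 d : R) :
  0 < d -> (forall x, Rabs (x - x0) < d -> f x = g x) ->
  analytic_at f x0 -> analytic_at g x0.
Proof.
  intros Hd Hfg [r [Hr [a Ha]]].
  exists (Rmin r d); split; [apply Rmin_pos; lra|].
  exists a; intros x Hx.
  pose proof (Rmin_l r d); pose proof (Rmin_r r d).
  rewrite <- Hfg by lra; apply Ha; lra.
Qed.

Lemma analytic_at_ext (f g : R -> R) (x0 : R) :
  (forall x, f x = g x) -> analytic_at f x0 -> analytic_at g x0.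
Proof. intros Hfg; apply (analytic_at_ext_near f g x0 1); auto; lra. Qed.

Lemma analytic_at_const (c x0 : R) : analytic_at (fun _ => c) x0.
Proof.
  exists 1; split; [lra|].
  set (a := fun n => match n with O => c | S _ => 0 end).
  exists a; intros x _; apply is_pseries_R.
  pose proof (is_series_first_term (fun n => a n * (x - x0) ^ n)
    (fun n => Rmult_0_l _)) as Hc.
  simpl in Hc; rewrite Rmult_1_r in Hc; exact Hc.
Qed.

Lemma analytic_at_plus (f g : R -> R) (x0 : R) :
  analytic_at f x0 -> analytic_at g x0 -> analytic_at (fun t => f t + g t) x0.
Proof.
  intros [r1 [Hr1 [a Ha]]] [r2 [Hr2 [b Hb]]].
  exists (Rmin r1 r2); split; [apply Rmin_pos; auto|].
  exists (PS_plus a b); intros x Hx.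
  pose proof (Rmin_l r1 r2); pose proof (Rmin_r r1 r2).
  apply (is_pseries_plus a b); [apply Ha | apply Hb]; lra.
Qed.

Lemma analytic_at_opp (f : R -> R) (x0 : R) :
  analytic_at f x0 -> analytic_at (fun t => - f t) x0.
Proof.
  intros [r [Hr [a Ha]]]; exists r; split; auto.
  exists (PS_opp a); intros x Hx; apply (is_pseries_opp a); auto.
Qed.

Lemma analytic_at_minus (f g : R -> R) (x0 : R) :
  analytic_at f x0 -> analytic_at g x0 -> analytic_at (fun t => f t - g t) x0.
Proof.
  intros Hf Hg; apply (analytic_at_ext (fun t => f t + - g t)); [intros; ring|].
  apply analytic_at_plus; [|apply analytic_at_opp]; auto.
Qed.

Lemma analytic_at_mult (f g : R -> R) (x0 : R) :
  analytic_at f x0 -> analytic_at g x0 -> analytic_at (fun t => f t * g t) x0.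
Proof.
  intros [r1 [Hr1 [a Ha]]] [r2 [Hr2 [b Hb]]].
  exists (Rmin r1 r2); split; [apply Rmin_pos; auto|].
  exists (PS_mult a b); intros x Hx.
  pose proof (Rmin_l r1 r2); pose proof (Rmin_r r1 r2).
  apply is_pseries_mult; [apply Ha | apply Hb | |]; try lra.
  - apply (pseries_near_CV_radius f x0 r1); auto; lra.
  - apply (pseries_near_CV_radius g x0 r2); auto; lra.
Qed.

Lemma analytic_at_continuity (f : R -> R) (x0 : R) : analytic_at f x0 ->
  forall eps, 0 < eps ->
  exists d, 0 < d /\ forall x, Rabs (x - x0) < d -> Rabs (f x - f x0) < eps.
Proof.
  intros [r [Hr [a Ha]]] eps Heps.
  assert (Hsum : forall x, Rabs (x - x0) < r -> f x = PSeries a (x - x0)).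
  { intros x Hx; symmetry; apply is_pseries_unique; auto. }
  assert (Hrad : Rbar_lt (Rabs 0) (CV_radius a)).
  { apply (pseries_near_CV_radius f x0 r); auto; rewrite Rabs_R0; lra. }
  destruct (PSeries_continuity a 0 Hrad eps Heps) as [d [Hd Hcont]].
  exists (Rmin d r); split; [apply Rmin_pos; auto|].
  intros x Hx; pose proof (Rmin_l d r); pose proof (Rmin_r d r).
  rewrite (Hsum x), (Hsum x0) by (rewrite ?Rminus_diag, ?Rabs_R0; lra).
  rewrite Rminus_diag.
  destruct (Req_dec x x0) as [->|Hne].
  - rewrite Rminus_diag, Rminus_diag, Rabs_R0; auto.
  - apply Hcont; split.
    + split; [exact I|]; intros Heq; apply Hne; lra.
    + simpl; unfold R_dist; rewrite Rminus_0_r; lra.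
Qed.

Lemma analytic_at_ge0_of_near (f : R -> R) (x0 : R) : analytic_at f x0 ->
  (forall d, 0 < d -> exists x, Rabs (x - x0) < d /\ 0 <= f x) -> 0 <= f x0.
Proof.
  intros Hf Hnear; destruct (Rle_or_lt 0 (f x0)) as [|Hneg]; auto.
  destruct (analytic_at_continuity f x0 Hf (- f x0)) as [d [Hd Hcont]]; [lra|].
  destruct (Hnear d Hd) as [x [Hx Hfx]].
  specialize (Hcont x Hx); apply Rabs_def2 in Hcont; lra.
Qed.

(** * Reciprocals of analytic functions *)

(* [recip_coef_table a n] holds b_0, ..., b_n, the coefficients of 1 / (sum a_k x^k),
   determined by the Cauchy-product equations sum_(k <= j) a_k b_(j-k) = [j = 0]. *)
Fixpoint recip_coef_table (a : nat -> R) (n : nat) : nat -> R :=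
  match n with
  | O => fun _ => / a 0%nat
  | S m => fun j =>
      if Nat.leb j m then recip_coef_table a m j
      else - / a 0%nat * sum_f_R0 (fun k => a (S k) * recip_coef_table a m (m - k)) m
  end.

Definition recip_coef (a : nat -> R) (n : nat) : R := recip_coef_table a n n.

Lemma recip_coef_table_stable (a : nat -> R) (m j : nat) :
  (j <= m)%nat -> recip_coef_table a m j = recip_coef a j.
Proof.
  induction m as [|m IH]; intros Hj.
  - replace j with 0%nat by lia; reflexivity.
  - simpl; destruct (Nat.leb j m) eqn:Hjm.
    + apply Nat.leb_le in Hjm; auto.
    + apply Nat.leb_gt in Hjm; replace j with (S m) by lia.
      unfold recip_coef; cbn [recip_coef_table]; rewrite (proj2 (Nat.leb_gt (S m) m)) by lia.
      reflexivity.
Qed.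

Lemma recip_coef_S (a : nat -> R) (m : nat) :
  recip_coef a (S m) =
  - / a 0%nat * sum_f_R0 (fun k => a (S k) * recip_coef a (m - k)) m.
Proof.
  unfold recip_coef at 1; cbn [recip_coef_table]; rewrite (proj2 (Nat.leb_gt (S m) m)) by lia.
  f_equal; apply sum_eq; intros k Hk.
  rewrite recip_coef_table_stable by lia; reflexivity.
Qed.

Lemma PS_mult_recip_coef (a : nat -> R) (n : nat) : a 0%nat <> 0 ->
  PS_mult a (recip_coef a) n = match n with O => 1 | S _ => 0 end.
Proof.
  intros Ha0; unfold PS_mult; destruct n as [|m].
  - simpl; unfold recip_coef; simpl; field; auto.
  - rewrite decomp_sum by lia; simpl pred.
    rewrite Nat.sub_0_r, recip_coef_S; field_simplify; auto.
    replace (sum_f_R0 (fun i => a (S i) * recip_coef a (S m - S i)) m)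
      with (sum_f_R0 (fun k => a (S k) * recip_coef a (m - k)) m)
      by (apply sum_eq; reflexivity).
    field; auto.
Qed.

Lemma sum_pow_S_le (t : R) (n : nat) :
  0 <= t < 1 -> sum_f_R0 (fun k => t ^ S k) n <= t / (1 - t).
Proof.
  intros Ht.
  replace (sum_f_R0 (fun k => t ^ S k) n) with (t * sum_f_R0 (fun k => t ^ k) n)
    by (rewrite scal_sum; apply sum_eq; intros; simpl; ring).
  rewrite tech3 by lra.
  pose proof (pow_le t (S n) (proj1 Ht)).
  apply (Rmult_le_reg_r (1 - t)); [lra|].
  field_simplify; nra.
Qed.

Lemma recip_coef_bound (a : nat -> R) (M rho : R) :
  a 0%nat <> 0 -> 0 < M -> 0 < rho -> (forall n, Rabs (a n) * rho ^ n <= M) ->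
  forall n, Rabs (recip_coef a n) <= / Rabs (a 0%nat) * ((1 + M / Rabs (a 0%nat)) / rho) ^ n.
Proof.
  intros Ha0 HM Hrho Ha.
  set (c := Rabs (a 0%nat)); set (K := M / c); set (q := (1 + K) / rho).
  assert (Hc : 0 < c) by (apply Rabs_pos_lt; auto).
  assert (HK : 0 < K) by (apply Rdiv_lt_0_compat; auto).
  assert (Hq : 0 < q) by (apply Rdiv_lt_0_compat; lra).
  assert (Hrq : rho * q = 1 + K) by (unfold q; field; lra).
  set (t := / (rho * q)).
  assert (Ht : 0 <= t < 1).
  { unfold t; rewrite Hrq; split.
    - apply Rlt_le, Rinv_0_lt_compat; lra.
    - rewrite <- Rinv_1; apply Rinv_lt_contravar; lra. }
  assert (Htt : t / (1 - t) = / K) by (unfold t; rewrite Hrq; field; lra).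
  assert (Hak : forall k, Rabs (a k) <= M / rho ^ k).
  { intros k; apply (Rmult_le_reg_r (rho ^ k)); [apply pow_lt; auto|].
    unfold Rdiv; rewrite Rmult_assoc, Rinv_l by (apply pow_nonzero; lra).
    rewrite Rmult_1_r; apply Ha. }
  intros n; induction n as [n IH] using lt_wf_ind; destruct n as [|m].
  - unfold recip_coef; simpl; rewrite Rabs_inv; fold c; lra.
  - rewrite recip_coef_S, Rabs_mult, Rabs_Ropp, Rabs_inv; fold c.
    apply Rmult_le_compat_l; [apply Rlt_le, Rinv_0_lt_compat; auto|].
    eapply Rle_trans; [apply sum_f_R0_triangle|].
    apply (Rle_trans _ (sum_f_R0 (fun k => t ^ S k * (K * q ^ S m)) m)).
    + apply sum_Rle; intros k Hk; rewrite Rabs_mult.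
      eapply Rle_trans.
      { apply Rmult_le_compat; try apply Rabs_pos; [apply Hak | apply IH; lia]. }
      right.
      assert (Hsplit : q ^ S m = q ^ (m - k) * q ^ S k)
        by (rewrite <- pow_add; f_equal; lia).
      unfold t; rewrite Hsplit, pow_inv, Rpow_mult_distr; unfold K.
      field; repeat split; try apply pow_nonzero; lra.
    + rewrite <- scal_sum.
      apply (Rle_trans _ (K * q ^ S m * (t / (1 - t)))).
      * apply Rmult_le_compat_l; [|apply sum_pow_S_le; auto].
        apply Rmult_le_pos; [lra | apply pow_le; lra].
      * rewrite Htt; right; field; lra.
Qed.

Lemma analytic_at_inv (f : R -> R) (x0 : R) :
  analytic_at f x0 -> f x0 <> 0 -> analytic_at (fun t => / f t) x0.
Proof.
  intros [r [Hr [a Ha]]] Hf0.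
  assert (Ha0 : a 0%nat <> 0).
  { rewrite <- PSeries_0, (is_pseries_unique a 0 (f x0)); auto.
    replace 0 with (x0 - x0) by ring; apply Ha; rewrite Rminus_diag, Rabs_R0; lra. }
  set (rho := r / 2).
  assert (Hrho : 0 < rho) by (unfold rho; lra).
  destruct (is_pseries_bounded_terms a rho (f (x0 + rho))) as [M0 HM0].
  { replace rho with (x0 + rho - x0) at 1 by ring; apply Ha.
    replace (x0 + rho - x0) with rho by ring; rewrite Rabs_pos_eq; unfold rho; lra. }
  set (M := Rmax M0 1).
  assert (HM : 0 < M) by (pose proof (Rmax_r M0 1); unfold M; lra).
  assert (Hbnd : forall n, Rabs (a n) * rho ^ n <= M).
  { intros n; specialize (HM0 n); pose proof (Rmax_l M0 1).
    rewrite Rabs_mult, (Rabs_pos_eq (rho ^ n)) in HM0 by (apply pow_le; lra).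
    unfold M; lra. }
  pose proof (recip_coef_bound a M rho Ha0 HM Hrho Hbnd) as Hb.
  set (c := Rabs (a 0%nat)) in Hb; set (q := (1 + M / c) / rho) in Hb.
  assert (Hc : 0 < c) by (apply Rabs_pos_lt; auto).
  assert (Hq : 0 < q).
  { apply Rdiv_lt_0_compat; auto; pose proof (Rdiv_lt_0_compat M c HM Hc); lra. }
  set (b := recip_coef a) in Hb.
  assert (Hradb : Rbar_le (/ q) (CV_radius b)).
  { apply (proj1 (CV_radius_bounded b)); exists (/ c); intros n.
    rewrite Rabs_mult, (Rabs_pos_eq (_ ^ n)) by (apply pow_le, Rlt_le, Rinv_0_lt_compat; lra).
    eapply Rle_trans; [apply Rmult_le_compat_r; [apply pow_le, Rlt_le, Rinv_0_lt_compat; lra | apply Hb]|].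
    rewrite Rmult_assoc, <- Rpow_mult_distr, Rinv_r, pow1 by lra; lra. }
  exists (Rmin r (/ q)); split; [apply Rmin_pos; auto; apply Rinv_0_lt_compat; auto|].
  exists b; intros x Hx.
  pose proof (Rmin_l r (/ q)); pose proof (Rmin_r r (/ q)).
  assert (Hya : Rbar_lt (Rabs (x - x0)) (CV_radius a))
    by (apply (pseries_near_CV_radius f x0 r); auto; lra).
  assert (Hyb : Rbar_lt (Rabs (x - x0)) (CV_radius b))
    by (destruct (CV_radius b); simpl in *; try tauto; lra).
  pose proof (PSeries_correct b (x - x0) (CV_radius_inside b (x - x0) Hyb)) as HB.
  assert (Hprod := is_pseries_mult a b (x - x0) (f x) _ (Ha x ltac:(lra)) HB Hya Hyb).
  assert (Hone : is_pseries (PS_mult a b) (x - x0) 1).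
  { apply is_pseries_R.
    pose proof (is_series_first_term (fun n => PS_mult a b n * (x - x0) ^ n)) as H1.
    unfold b in H1 |- *; rewrite PS_mult_recip_coef in H1 by auto.
    simpl in H1; rewrite Rmult_1_r in H1; apply H1.
    intros n; rewrite PS_mult_recip_coef by auto; ring. }
  apply is_pseries_unique in Hprod; apply is_pseries_unique in Hone.
  rewrite Hprod in Hone.
  assert (Hfx : f x <> 0) by (intros Hz; rewrite Hz in Hone; lra).
  replace (/ f x) with (PSeries b (x - x0)); auto.
  apply (Rmult_eq_reg_l (f x)); auto; rewrite Rinv_r; auto.
Qed.

Definition C_analytic_at (f : R -> C) (x0 : R) : Prop :=
  analytic_at (fun t => Re (f t)) x0 /\ analytic_at (fun t => Im (f t)) x0.

Lemma C_analytic_at_RtoC (f : R -> R) (x0 : R) :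
  analytic_at f x0 -> C_analytic_at (fun t => RtoC (f t)) x0.
Proof.
  intros Hf; split; [exact Hf|].
  apply (analytic_at_ext (fun _ => 0)); [reflexivity | apply analytic_at_const].
Qed.

Lemma C_analytic_at_plus (f g : R -> C) (x0 : R) :
  C_analytic_at f x0 -> C_analytic_at g x0 -> C_analytic_at (fun t => f t + g t)%C x0.
Proof. intros [Hf1 Hf2] [Hg1 Hg2]; split; apply analytic_at_plus; auto. Qed.

Lemma C_analytic_at_minus (f g : R -> C) (x0 : R) :
  C_analytic_at f x0 -> C_analytic_at g x0 -> C_analytic_at (fun t => f t - g t)%C x0.
Proof.
  intros [Hf1 Hf2] [Hg1 Hg2]; split.
  - apply (analytic_at_ext (fun t => Re (f t) - Re (g t))); [reflexivity|].
    apply analytic_at_minus; auto.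
  - apply (analytic_at_ext (fun t => Im (f t) - Im (g t))); [reflexivity|].
    apply analytic_at_minus; auto.
Qed.

Lemma C_analytic_at_mult (f g : R -> C) (x0 : R) :
  C_analytic_at f x0 -> C_analytic_at g x0 -> C_analytic_at (fun t => f t * g t)%C x0.
Proof.
  intros [Hf1 Hf2] [Hg1 Hg2]; split.
  - apply (analytic_at_ext (fun t => Re (f t) * Re (g t) - Im (f t) * Im (g t)));
      [intros t; reflexivity|].
    apply analytic_at_minus; apply analytic_at_mult; auto.
  - apply (analytic_at_ext (fun t => Re (f t) * Im (g t) + Im (f t) * Re (g t)));
      [intros t; reflexivity|].
    apply analytic_at_plus; apply analytic_at_mult; auto.
Qed.

Lemma C_analytic_at_conj (f : R -> C) (x0 : R) :
  C_analytic_at f x0 -> C_analytic_at (fun t => Cconj (f t)) x0.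
Proof. intros [Hf1 Hf2]; split; [exact Hf1 | apply analytic_at_opp; exact Hf2]. Qed.

Definition Cnorm2 (z : C) : R := Re z ^ 2 + Im z ^ 2.

Lemma C_analytic_at_Cnorm2 (f : R -> C) (x0 : R) :
  C_analytic_at f x0 -> analytic_at (fun t => Cnorm2 (f t)) x0.
Proof.
  intros [Hf1 Hf2]; unfold Cnorm2; simpl.
  apply analytic_at_plus; apply analytic_at_mult; auto; apply analytic_at_mult; auto;
    apply analytic_at_const.
Qed.

Lemma Cconj_RtoC (r : R) : Cconj (RtoC r) = RtoC r.
Proof. unfold Cconj, RtoC; simpl; f_equal; ring. Qed.

Lemma Cnorm2_mult (c z : C) : Cnorm2 (c * z) = Cnorm2 c * Cnorm2 z.
Proof. destruct c, z; unfold Cnorm2, Re, Im; simpl; ring. Qed.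

Lemma Cnorm2_ge0 (z : C) : 0 <= Cnorm2 z.
Proof. unfold Cnorm2; pose proof (pow2_ge_0 (Re z)); pose proof (pow2_ge_0 (Im z)); lra. Qed.

Lemma Cnorm2_le0 (z : C) : Cnorm2 z <= 0 -> z = 0%C.
Proof.
  destruct z as [x y]; unfold Cnorm2, Re, Im; simpl; intros Hz.
  apply injective_projections; simpl; nra.
Qed.

Lemma Cnorm2_pos (z : C) : z <> 0%C -> 0 < Cnorm2 z.
Proof.
  destruct z as [x y]; unfold Cnorm2, Re, Im; simpl; intros Hz.
  destruct (Req_dec x 0), (Req_dec y 0); subst; try nra.
  exfalso; apply Hz; reflexivity.
Qed.

(** * 2x2 complex matrices *)

Definition Mat2_trace (A : Mat2) : C := (m11 A + m22 A)%C.

Definition Mat2_norm2 (A : Mat2) : R :=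
  Cnorm2 (m11 A) + Cnorm2 (m12 A) + Cnorm2 (m21 A) + Cnorm2 (m22 A).

Definition Mat2_normalize (A : Mat2) : Mat2 :=
  Mat2_scale (RtoC (/ Mat2_norm2 A) * Cconj (Mat2_trace A))%C A.

Lemma mat_analytic_atE (f : R -> Mat2) (x0 : R) :
  mat_analytic_at f x0 <->
  C_analytic_at (fun t => m11 (f t)) x0 /\ C_analytic_at (fun t => m12 (f t)) x0 /\
  C_analytic_at (fun t => m21 (f t)) x0 /\ C_analytic_at (fun t => m22 (f t)) x0.
Proof. unfold mat_analytic_at, C_analytic_at; tauto. Qed.

Lemma mat_analytic_at_ext_near (f g : R -> Mat2) (x0 d : R) :
  0 < d -> (forall x, Rabs (x - x0) < d -> f x = g x) ->
  mat_analytic_at f x0 -> mat_analytic_at g x0.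
Proof.
  intros Hd Hfg Hf.
  assert (Hp : forall p : Mat2 -> R,
    analytic_at (fun t => p (f t)) x0 -> analytic_at (fun t => p (g t)) x0).
  { intros p; apply analytic_at_ext_near with d; auto.
    intros x Hx; rewrite Hfg; auto. }
  destruct Hf as (H1 & H2 & H3 & H4 & H5 & H6 & H7 & H8).
  repeat split; match goal with
  | H : analytic_at (fun t => ?p (?m (f t))) _ |- analytic_at (fun t => ?p (?m (g t))) _ =>
      exact (Hp (fun A => p (m A)) H)
  end.
Qed.

Lemma Mat2_scale_scale (c d : C) (A : Mat2) :
  Mat2_scale c (Mat2_scale d A) = Mat2_scale (c * d)%C A.
Proof. unfold Mat2_scale; simpl; f_equal; ring. Qed.

Lemma Mat2_scale_1 (A : Mat2) : Mat2_scale 1%C A = A.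
Proof. destruct A; unfold Mat2_scale; simpl; f_equal; ring. Qed.

Lemma Mat2_scale_0 (A : Mat2) : Mat2_scale 0%C A = Mat2_zero.
Proof. unfold Mat2_scale, Mat2_zero; f_equal; ring. Qed.

Lemma Mat2_adj_scale (c : C) (A : Mat2) :
  Mat2_adj (Mat2_scale c A) = Mat2_scale (Cconj c) (Mat2_adj A).
Proof. unfold Mat2_adj, Mat2_scale; simpl; f_equal; apply Cmult_conj. Qed.

Lemma Mat2_trace_scale (c : C) (A : Mat2) :
  Mat2_trace (Mat2_scale c A) = (c * Mat2_trace A)%C.
Proof. unfold Mat2_trace; simpl; ring. Qed.

Lemma Mat2_trace_adj (A : Mat2) : Mat2_trace (Mat2_adj A) = Cconj (Mat2_trace A).
Proof. unfold Mat2_trace; simpl; rewrite Cplus_conj; reflexivity. Qed.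

Lemma Mat2_norm2_scale (c : C) (A : Mat2) :
  Mat2_norm2 (Mat2_scale c A) = Cnorm2 c * Mat2_norm2 A.
Proof. unfold Mat2_norm2; simpl; rewrite !Cnorm2_mult; ring. Qed.

Lemma Mat2_norm2_pos (A : Mat2) : A <> Mat2_zero -> 0 < Mat2_norm2 A.
Proof.
  intros HA; destruct A as [a b c d]; unfold Mat2_norm2; simpl.
  pose proof (Cnorm2_ge0 a); pose proof (Cnorm2_ge0 b).
  pose proof (Cnorm2_ge0 c); pose proof (Cnorm2_ge0 d).
  destruct (Rlt_le_dec 0 (Cnorm2 a + Cnorm2 b + Cnorm2 c + Cnorm2 d)) as [|Hle]; auto.
  exfalso; apply HA; unfold Mat2_zero.
  f_equal; apply Cnorm2_le0; lra.
Qed.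

Lemma Mat2_normalize_scale (c : C) (A : Mat2) :
  c <> 0%C -> A <> Mat2_zero -> Mat2_normalize (Mat2_scale c A) = Mat2_normalize A.
Proof.
  intros Hc HA; pose proof (Mat2_norm2_pos A HA) as HN; pose proof (Cnorm2_pos c Hc) as Hcn.
  unfold Mat2_normalize; rewrite Mat2_norm2_scale, Mat2_trace_scale, Mat2_scale_scale.
  f_equal; revert Hcn; set (t := Mat2_trace A); set (N := Mat2_norm2 A) in *.
  destruct c as [c1 c2], t as [t1 t2]; unfold Cnorm2, Re, Im; simpl; intros Hcn.
  apply injective_projections; simpl; field; lra.
Qed.

Lemma Mat2_normalize_hermitian (c : C) (A : Mat2) :
  Mat2_adj A = Mat2_scale c A -> hermitian (Mat2_normalize A).
Proof.
  intros HA; unfold hermitian, Mat2_normalize.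
  assert (Htr : Cconj (Mat2_trace A) = (c * Mat2_trace A)%C)
    by (rewrite <- Mat2_trace_adj, HA; apply Mat2_trace_scale).
  rewrite Mat2_adj_scale, HA, Mat2_scale_scale; f_equal.
  rewrite Cmult_conj, Cconj_conj, Htr, Cconj_RtoC; ring.
Qed.

Lemma mat_analytic_at_normalize (s : R -> Mat2) (x0 : R) :
  mat_analytic_at s x0 -> s x0 <> Mat2_zero ->
  mat_analytic_at (fun t => Mat2_normalize (s t)) x0.
Proof.
  intros Hs Hs0; pose proof (Mat2_norm2_pos _ Hs0) as HN.
  apply mat_analytic_atE in Hs; destruct Hs as (H11 & H12 & H21 & H22).
  assert (Hk : C_analytic_at
    (fun t => RtoC (/ Mat2_norm2 (s t)) * Cconj (Mat2_trace (s t)))%C x0).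
  { apply C_analytic_at_mult.
    - apply C_analytic_at_RtoC, analytic_at_inv; [|lra].
      unfold Mat2_norm2.
      apply analytic_at_plus; [apply analytic_at_plus; [apply analytic_at_plus|]|];
        apply C_analytic_at_Cnorm2; auto.
    - apply C_analytic_at_conj, C_analytic_at_plus; auto. }
  apply mat_analytic_atE; repeat split; apply C_analytic_at_mult; auto.
Qed.

Lemma hermitian_entries (A : Mat2) : hermitian A ->
  Im (m11 A) = 0 /\ Im (m22 A) = 0 /\ m21 A = Cconj (m12 A).
Proof.
  destruct A as [[a1 a2] [b1 b2] [c1 c2] [d1 d2]]; unfold hermitian, Mat2_adj; simpl.
  intros H; injection H; intros; subst; unfold Cconj; simpl; repeat split; lra.
Qed.

Lemma hermitian_qform_re (A : Mat2) (v1 v2 : C) : hermitian A ->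
  Re (qform A v1 v2) =
  Re (m11 A) * Cnorm2 v1 + Re (m22 A) * Cnorm2 v2
  + 2 * Re (m12 A) * (Re v1 * Re v2 + Im v1 * Im v2)
  - 2 * Im (m12 A) * (Re v1 * Im v2 - Im v1 * Re v2).
Proof.
  intros HA; destruct (hermitian_entries A HA) as (H11 & H22 & H21).
  unfold qform; rewrite H21; revert H11 H22.
  destruct A as [[a1 a2] [b1 b2] c [d1 d2]], v1 as [x1 y1], v2 as [x2 y2].
  unfold Cnorm2, Re, Im; simpl; intros -> ->; ring.
Qed.

Lemma hermitian_det_re (A : Mat2) : hermitian A ->
  Re (Mat2_det A) = Re (m11 A) * Re (m22 A) - Cnorm2 (m12 A).
Proof.
  intros HA; destruct (hermitian_entries A HA) as (H11 & H22 & H21).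
  unfold Mat2_det; rewrite H21; revert H11 H22.
  destruct A as [[a1 a2] [b1 b2] c [d1 d2]].
  unfold Cnorm2, Re, Im; simpl; intros -> ->; ring.
Qed.

Lemma pos_def_entries (P : Mat2) : pos_def P ->
  0 < Re (m11 P) /\ 0 < Re (m22 P) /\ 0 < Re (Mat2_det P).
Proof.
  intros [HP Hq]; rewrite hermitian_det_re by auto.
  assert (Hnz : forall r, r <> 0 -> RtoC r <> 0%C)
    by (intros r Hr H; apply (f_equal fst) in H; simpl in H; auto).
  pose proof (Hq 1%C 0%C (or_introl C1_nz)) as Q1.
  pose proof (Hq 0%C 1%C (or_intror C1_nz)) as Q2.
  rewrite hermitian_qform_re in Q1, Q2 by auto.
  assert (Ha : 0 < Re (m11 P)) by (revert Q1; unfold Cnorm2, Re, Im; simpl; nra).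
  (* the vector (- P12, P11) realizes P11 * det P *)
  pose proof (Hq (- m12 P)%C (RtoC (Re (m11 P)))
    (or_intror (Hnz _ (Rgt_not_eq _ _ Ha)))) as Q3.
  rewrite hermitian_qform_re in Q3 by auto.
  revert Ha Q2 Q3; generalize (Re (m11 P)) (Re (m22 P)) (m12 P).
  intros a d [p q]; unfold Cnorm2, Re, Im; simpl; intros Ha Q2 Q3.
  assert (Hdet : 0 < a * d - (p * (p * 1) + q * (q * 1))).
  { apply (Rmult_lt_reg_l a); [lra|]; rewrite Rmult_0_r.
    eapply Rlt_le_trans; [exact Q3 | right; ring]. }
  repeat split; lra.
Qed.

Lemma pos_def_nonzero (P : Mat2) : pos_def P -> P <> Mat2_zero.
Proof.
  intros HP H0; destruct (pos_def_entries P HP) as [H11 _].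
  rewrite H0 in H11; simpl in H11; lra.
Qed.

Lemma pos_semidef_of_entries (X : Mat2) : hermitian X ->
  0 <= Re (m11 X) -> 0 <= Re (m22 X) -> 0 <= Re (Mat2_det X) -> pos_semidef X.
Proof.
  intros HX Ha Hd Hdet; split; auto; intros v1 v2.
  rewrite hermitian_qform_re by auto; rewrite hermitian_det_re in Hdet by auto.
  destruct (m12 X) as [p q], v1 as [x1 y1], v2 as [x2 y2].
  set (a := Re (m11 X)) in *; set (d := Re (m22 X)) in *.
  unfold Cnorm2, Re, Im in *; simpl in *.
  destruct (Req_dec a 0) as [Ha0|Ha0].
  - assert (p = 0) by nra; assert (q = 0) by nra; subst; nra.
  - (* completing the square in v1 *)
    apply (Rmult_le_reg_l a); [lra|]; rewrite Rmult_0_r.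
    replace (a * _) with ((a * x1 + p * x2 - q * y2) ^ 2 + (a * y1 + p * y2 + q * x2) ^ 2
      + (a * d - (p ^ 2 + q ^ 2)) * (x2 ^ 2 + y2 ^ 2)) by ring.
    pose proof (pow2_ge_0 (a * x1 + p * x2 - q * y2)).
    pose proof (pow2_ge_0 (a * y1 + p * y2 + q * x2)).
    assert (0 <= (a * d - (p ^ 2 + q ^ 2)) * (x2 ^ 2 + y2 ^ 2)) by (apply Rmult_le_pos; nra).
    lra.
Qed.

Lemma pos_def_scale (r : R) (P : Mat2) :
  0 < r -> pos_def P -> pos_def (Mat2_scale (RtoC r) P).
Proof.
  intros Hr [HP Hq]; split.
  - unfold hermitian; rewrite Mat2_adj_scale, HP, Cconj_RtoC; reflexivity.
  - intros v1 v2 Hv.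
    replace (qform (Mat2_scale (RtoC r) P) v1 v2) with (RtoC r * qform P v1 v2)%C
      by (unfold qform; simpl; ring).
    specialize (Hq v1 v2 Hv); revert Hq; generalize (qform P v1 v2).
    intros [x y]; unfold Re; simpl; nra.
Qed.

Lemma hermitian_trace (A : Mat2) : hermitian A ->
  Mat2_trace A = RtoC (Re (m11 A) + Re (m22 A)).
Proof.
  intros HA; destruct (hermitian_entries A HA) as (H11 & H22 & _).
  unfold Mat2_trace; revert H11 H22; destruct (m11 A) as [a1 a2], (m22 A) as [d1 d2].
  unfold Re, Im, RtoC; simpl; intros -> ->; apply injective_projections; simpl; ring.
Qed.

Lemma Mat2_normalize_pos_def (P : Mat2) : pos_def P -> pos_def (Mat2_normalize P).
Proof.
  intros HP; destruct (pos_def_entries P HP) as (H11 & H22 & _).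
  pose proof (Mat2_norm2_pos P (pos_def_nonzero P HP)) as HN.
  unfold Mat2_normalize; rewrite (hermitian_trace P (proj1 HP)), Cconj_RtoC, <- RtoC_mult.
  apply pos_def_scale; auto.
  apply Rmult_lt_0_compat; [apply Rinv_0_lt_compat|]; lra.
Qed.

(** * Periodic sets *)

Lemma periodic_shift_Z (P : R -> Prop) :
  (forall theta, P (theta + 2 * PI) <-> P theta) ->
  forall (z : Z) (theta : R), P (theta + 2 * PI * IZR z) <-> P theta.
Proof.
  intros HP z; induction z as [|z IH|z IH] using Z.peano_ind; intros theta.
  - simpl; rewrite Rmult_0_r, Rplus_0_r; tauto.
  - rewrite succ_IZR.
    replace (theta + 2 * PI * (IZR z + 1)) with (theta + 2 * PI * IZR z + 2 * PI) by ring.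
    rewrite HP; apply IH.
  - rewrite <- Z.sub_1_r, minus_IZR, <- (HP (theta + 2 * PI * (IZR z - 1))).
    replace (theta + 2 * PI * (IZR z - 1) + 2 * PI) with (theta + 2 * PI * IZR z) by ring.
    apply IH.
Qed.

Lemma exists_shift_into_period (theta : R) :
  exists z : Z, 0 <= theta - 2 * PI * IZR z < 2 * PI.
Proof.
  pose proof PI_RGT_0.
  exists (up (theta / (2 * PI)) - 1)%Z; rewrite minus_IZR.
  destruct (archimed (theta / (2 * PI))) as [Hup1 Hup2].
  assert (Htheta : theta = 2 * PI * (theta / (2 * PI))) by (field; lra).
  set (x := theta / (2 * PI)) in *; set (u := IZR (up x)) in *; nra.
Qed.

Lemma exists_not_In_injective (l : list R) (f : nat -> R) :
  (forall i j, f i = f j -> i = j) -> exists k, ~ In (f k) l.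
Proof.
  revert f; induction l as [|b l IH]; intros f Hf.
  - exists 0%nat; auto.
  - destruct (IH f Hf) as [k Hk].
    destruct (Req_dec (f k) b) as [Hkb|Hkb].
    + destruct (IH (fun n => f (S (k + n)))) as [k' Hk'].
      { intros i j Hij; apply Hf in Hij; lia. }
      exists (S (k + k')); intros [Hb|Hin]; auto.
      rewrite <- Hkb in Hb; apply Hf in Hb; lia.
    + exists k; intros [Hb|Hin]; auto.
Qed.

Lemma periodic_cofinite_near (P : R -> Prop) (bad : list R) :
  (forall theta, P (theta + 2 * PI) <-> P theta) ->
  (forall theta, 0 <= theta < 2 * PI -> ~ In theta bad -> P theta) ->
  forall theta0 d, 0 < d -> exists theta, Rabs (theta - theta0) < d /\ P theta.
Proof.
  intros HP Hgood theta0 d Hd.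
  destruct (exists_shift_into_period theta0) as [z Hz].
  set (phi0 := theta0 - 2 * PI * IZR z) in Hz.
  set (m := Rmin d (2 * PI - phi0)).
  assert (Hm : 0 < m) by (apply Rmin_pos; lra).
  assert (Hstep : forall k, 0 < m / (INR k + 2) < m).
  { intros k; pose proof (pos_INR k); split.
    - apply Rdiv_lt_0_compat; lra.
    - apply (Rmult_lt_reg_r (INR k + 2)); [lra|].
      unfold Rdiv; rewrite Rmult_assoc, Rinv_l by lra; nra. }
  destruct (exists_not_In_injective bad (fun k => phi0 + m / (INR k + 2))) as [k Hk].
  { intros i j Hij; apply INR_eq.
    assert (Hinv : / (INR i + 2) = / (INR j + 2)).
    { apply (Rmult_eq_reg_l m); [|lra]; unfold Rdiv in Hij; lra. }
    apply Rinv_eq_reg in Hinv; lra. }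
  exists (theta0 + m / (INR k + 2)); split.
  - specialize (Hstep k); rewrite Rabs_pos_eq by lra.
    pose proof (Rmin_l d (2 * PI - phi0)); unfold m in *; lra.
  - specialize (Hstep k); pose proof (Rmin_r d (2 * PI - phi0)).
    replace (theta0 + m / (INR k + 2)) with (phi0 + m / (INR k + 2) + 2 * PI * IZR z)
      by (unfold phi0; ring).
    apply periodic_shift_Z; auto.
    apply Hgood; auto; unfold m in *; lra.
Qed.

(** * The normalized section *)

Section AnalyticLineBundle.

Variable E : R -> Mat2 -> Prop.
Hypothesis E_line : analytic_line_subbundle E.

Lemma fiber_is_line (theta : R) : exists B, B <> Mat2_zero /\
  forall A, E theta A <-> exists c, A = Mat2_scale c B.
Proof.
  destruct (proj2 E_line theta) as [r [Hr [s Hs]]].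
  destruct (Hs theta) as [_ [Hnz Hfib]]; [rewrite Rminus_diag, Rabs_R0; lra|].
  exists (s theta); auto.
Qed.

Lemma fiber_scale (theta : R) (c : C) (A : Mat2) :
  E theta A -> E theta (Mat2_scale c A).
Proof.
  intros HA; destruct (fiber_is_line theta) as [B [_ HB]].
  destruct (proj1 (HB A) HA) as [d ->].
  apply HB; exists (c * d)%C; apply Mat2_scale_scale.
Qed.

Lemma fiber_proportional (theta : R) (A B : Mat2) :
  E theta A -> E theta B -> A <> Mat2_zero -> exists c, B = Mat2_scale c A.
Proof.
  intros HA HB HA0; destruct (fiber_is_line theta) as [S0 [_ HS0]].
  destruct (proj1 (HS0 A) HA) as [a Ha], (proj1 (HS0 B) HB) as [b Hb].
  assert (Ha0 : a <> 0%C) by (intros H0; apply HA0; rewrite Ha, H0; apply Mat2_scale_0).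
  exists (b / a)%C; rewrite Ha, Hb, Mat2_scale_scale; f_equal; field; auto.
Qed.

Lemma fiber_nonzero (theta : R) : exists A, E theta A /\ A <> Mat2_zero.
Proof.
  destruct (fiber_is_line theta) as [B [HB0 HB]].
  exists B; split; auto; apply HB; exists 1%C; symmetry; apply Mat2_scale_1.
Qed.

Definition fiber_elt (theta : R) : Mat2 :=
  proj1_sig (constructive_indefinite_description _ (fiber_nonzero theta)).

Lemma fiber_elt_spec (theta : R) : E theta (fiber_elt theta) /\ fiber_elt theta <> Mat2_zero.
Proof. exact (proj2_sig (constructive_indefinite_description _ (fiber_nonzero theta))). Qed.

Definition normalized_section (theta : R) : Mat2 := Mat2_normalize (fiber_elt theta).

Lemma normalized_section_eq (theta : R) (B : Mat2) :
  E theta B -> B <> Mat2_zero -> normalized_section theta = Mat2_normalize B.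
Proof.
  intros HB HB0; destruct (fiber_elt_spec theta) as [HA HA0].
  destruct (fiber_proportional theta _ _ HA HB HA0) as [c ->].
  assert (Hc : c <> 0%C) by (intros H0; apply HB0; rewrite H0; apply Mat2_scale_0).
  symmetry; apply Mat2_normalize_scale; auto.
Qed.

Lemma normalized_section_in_fiber (theta : R) : E theta (normalized_section theta).
Proof. apply fiber_scale, fiber_elt_spec. Qed.

Lemma normalized_section_periodic (theta : R) :
  normalized_section (theta + 2 * PI) = normalized_section theta.
Proof.
  destruct (fiber_elt_spec (theta + 2 * PI)) as [HA HA0].
  symmetry; apply normalized_section_eq; auto.
  apply (proj1 E_line); exact HA.
Qed.

Lemma normalized_section_analytic (theta0 : R) : mat_analytic_at normalized_section theta0.
Proof.
  destruct (proj2 E_line theta0) as [r [Hr [s Hs]]].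
  destruct (Hs theta0) as [Hs_an [Hs0 _]]; [rewrite Rminus_diag, Rabs_R0; lra|].
  apply (mat_analytic_at_ext_near (fun t => Mat2_normalize (s t)) _ theta0 r Hr).
  - intros t Ht; destruct (Hs t Ht) as [_ [Hst0 Hfib]].
    symmetry; apply normalized_section_eq; auto.
    apply Hfib; exists 1%C; symmetry; apply Mat2_scale_1.
  - apply mat_analytic_at_normalize; auto.
Qed.

Hypothesis E_adj : forall theta A, E theta A -> E theta (Mat2_adj A).

Lemma normalized_section_hermitian (theta : R) : hermitian (normalized_section theta).
Proof.
  destruct (fiber_elt_spec theta) as [HA HA0].
  destruct (fiber_proportional theta _ _ HA (E_adj _ _ HA) HA0) as [c Hc].
  exact (Mat2_normalize_hermitian c _ Hc).
Qed.

Variable bad : list R.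
Hypothesis E_pos_def : forall theta, 0 <= theta < 2 * PI -> ~ In theta bad ->
  exists A, E theta A /\ pos_def A.

Lemma normalized_section_pos_def_near (theta0 d : R) : 0 < d ->
  exists theta, Rabs (theta - theta0) < d /\ pos_def (normalized_section theta).
Proof.
  intros Hd.
  destruct (periodic_cofinite_near (fun theta => exists A, E theta A /\ pos_def A) bad)
    with theta0 d as [theta [Htheta [P [HP HPpd]]]]; auto.
  { intros theta; split; intros [A [HA HApd]]; exists A; split; auto;
      apply (proj1 E_line); auto. }
  exists theta; split; auto.
  rewrite (normalized_section_eq theta P HP (pos_def_nonzero P HPpd)).
  apply Mat2_normalize_pos_def; auto.
Qed.

Lemma normalized_section_pos_semidef (theta : R) : pos_semidef (normalized_section theta).
Proof.
  set (X := normalized_section).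
  destruct (proj1 (mat_analytic_atE X theta) (normalized_section_analytic theta))
    as (H11 & H12 & H21 & H22).
  assert (Hnear : forall f : Mat2 -> R, analytic_at (fun t => f (X t)) theta ->
    (forall P, pos_def P -> 0 < f P) -> 0 <= f (X theta)).
  { intros f Hf HfP; apply (analytic_at_ge0_of_near (fun t => f (X t))); auto.
    intros d Hd; destruct (normalized_section_pos_def_near theta d Hd) as [t [Ht HPt]].
    exists t; split; auto; apply Rlt_le, HfP; auto. }
  apply pos_semidef_of_entries.
  - apply normalized_section_hermitian.
  - apply (Hnear (fun A => Re (m11 A))); [exact (proj1 H11)|].
    intros P HP; apply (pos_def_entries P HP).
  - apply (Hnear (fun A => Re (m22 A))); [exact (proj1 H22)|].
    intros P HP; apply (pos_def_entries P HP).
  - apply (Hnear (fun A => Re (Mat2_det A))).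
    + exact (proj1 (C_analytic_at_minus _ _ _ (C_analytic_at_mult _ _ _ H11 H22)
        (C_analytic_at_mult _ _ _ H12 H21))).
    + intros P HP; apply (pos_def_entries P HP).
Qed.

End AnalyticLineBundle.

Theorem mainTheorem10 (E : R -> Mat2 -> Prop) :
  analytic_line_subbundle E ->
  (forall (theta : R) (A : Mat2), E theta A -> E theta (Mat2_adj A)) ->
  (exists bad : list R, forall theta : R, 0 <= theta < 2 * PI -> ~ In theta bad ->
     exists A : Mat2, E theta A /\ pos_def A) ->
  exists X : R -> Mat2,
    analytic_section E X /\
    (forall theta : R, pos_semidef (X theta)) /\
    (exists theta : R, Mat2_det (X theta) <> 0%C).
Proof.
  intros E_line E_adj [bad E_pos_def].
  exists (normalized_section E E_line); split; [split; [|split]|split].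
  - apply normalized_section_periodic.
  - apply normalized_section_analytic.
  - apply normalized_section_in_fiber.
  - intros theta; apply (normalized_section_pos_semidef E E_line E_adj bad E_pos_def).
  - destruct (normalized_section_pos_def_near E E_line bad E_pos_def 0 1) as [theta [_ Hpd]];
      [lra|].
    exists theta; intros Hdet.
    destruct (pos_def_entries _ Hpd) as (_ & _ & Hdet_pos).
    rewrite Hdet in Hdet_pos; simpl in Hdet_pos; lra.
Qed.
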